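(* Let $H$ be a complex Hilbert space and let $\mathcal S(H)$ be the set of bounded self-adjoint operators on $H$, ordered by the logical order $\preceq$. Suppose that $\mathcal T \subseteq \mathcal S(H)$, $\mathcal T \neq \varnothing$, and that $B \in \mathcal S(H)$ is an upper bound of $\mathcal T$ with respect to $\preceq$. Then the operators $B\big(\bigwedge(P_A : A \in \mathcal T)\big)$ and $B\big(\bigvee(P_A : A \in \mathcal T)\big)$ belong to $\mathcal S(H)$, and (a) $B\big(\bigwedge(P_A : A \in \mathcal T)\big)$ is the greatest lower bound of $\mathcal T$ in $(\mathcal S(H),\preceq)$; (b) $B\big(\bigvee(P_A : A \in \mathcal T)\big)$ is the least upper bound of $\mathcal T$ in $(\mathcal S(H),\preceq)$.
   Context: For $A \in \mathcal S(H)$, $P_A$ denotes the orthogonal projection onto the closure of the range of $A$. The set of all orthogonal projections on $H$ is a complete lattice under the usual order ($P_1 \le P_2$ iff $P_1P_2 = P_1$); $\bigwedge$ and $\bigvee$ denote meet and join in this lattice. For $A,B \in \mathcal S(H)$, write $A \perp B$ if $AB = O$ (the zero operator). The logical order is defined by $A \preceq B$ iff $B = A + C$ for some $C \in \mathcal S(H)$ with $C \perp A$; equivalently, $A = BP_A$. Products such as $BP$ denote operator composition. *)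

From mathcomp Require Import all_boot all_algebra.
From mathcomp Require Import reals complex.
From Stdlib Require Import ClassicalEpsilon.
Import GRing.Theory Num.Theory.
Set Implicit Arguments. Unset Strict Implicit. Unset Printing Implicit Defensive.
Local Open Scope ring_scope.
Local Open Scope complex_scope.

Section Hilbert.
Variables (R : realType) (V : lmodType R[i]) (ip : V -> V -> R[i]).

(* ip is an inner product (linear in the first argument) and V is complete
   for the induced norm ||x|| = sqrt <x,x> (stated with squared norms). *)
Definition is_Hilbert : Prop :=
  [/\ (forall (a : R[i]) x y z, ip (a *: x + y) z = a * ip x z + ip y z),
      (forall x y, ip y x = (ip x y)^*),
      (forall x, 0 <= ip x x),
      (forall x, ip x x = 0 -> x = 0) &
      (forall u : nat -> V,
         (forall e : R[i], 0 < e -> exists N : nat, forall m n : nat,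
            (N <= m)%N -> (N <= n)%N -> ip (u m - u n) (u m - u n) < e) ->
         exists l : V, forall e : R[i], 0 < e -> exists N : nat, forall n : nat,
            (N <= n)%N -> ip (u n - l) (u n - l) < e)].

Definition bounded_op (A : V -> V) : Prop :=
  (forall (a : R[i]) x y, A (a *: x + y) = a *: A x + A y) /\
  exists M : R[i], 0 <= M /\ forall x, ip (A x) (A x) <= M * ip x x.

Definition selfadj (A : V -> V) : Prop :=
  bounded_op A /\ forall x y, ip (A x) y = ip x (A y).

Definition op_perp (A B : V -> V) : Prop := forall x, A (B x) = 0.

Definition log_le (A B : V -> V) : Prop :=
  exists C : V -> V, selfadj C /\ op_perp C A /\ B = (fun x => A x + C x).

Definition is_proj (P : V -> V) : Prop := selfadj P /\ forall x, P (P x) = P x.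
Definition proj_le (P1 P2 : V -> V) : Prop := forall x, P1 (P2 x) = P1 x.

Definition clrange (A : V -> V) (y : V) : Prop :=
  forall e : R[i], 0 < e -> exists x, ip (A x - y) (A x - y) < e.

Definition projP (A : V -> V) : V -> V :=
  epsilon (inhabits (fun x : V => x))
    (fun P => is_proj P /\ forall y, (exists x, P x = y) <-> clrange A y).

Definition proj_meet (F : (V -> V) -> Prop) : V -> V :=
  epsilon (inhabits (fun x : V => x))
    (fun Q => is_proj Q /\ (forall P, F P -> proj_le Q P) /\
       (forall Q', is_proj Q' -> (forall P, F P -> proj_le Q' P) -> proj_le Q' Q)).
Definition proj_join (F : (V -> V) -> Prop) : V -> V :=
  epsilon (inhabits (fun x : V => x))
    (fun Q => is_proj Q /\ (forall P, F P -> proj_le P Q) /\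
       (forall Q', is_proj Q' -> (forall P, F P -> proj_le P Q') -> proj_le Q Q')).

Definition projs_of (T : (V -> V) -> Prop) (P : V -> V) : Prop :=
  exists A, T A /\ P = projP A.

Definition is_glb (T : (V -> V) -> Prop) (G : V -> V) : Prop :=
  selfadj G /\ (forall A, T A -> log_le G A) /\
  (forall G', selfadj G' -> (forall A, T A -> log_le G' A) -> log_le G' G).
Definition is_lub (T : (V -> V) -> Prop) (G : V -> V) : Prop :=
  selfadj G /\ (forall A, T A -> log_le A G) /\
  (forall G', selfadj G' -> (forall A, T A -> log_le A G') -> log_le G G').

End Hilbert.

From mathcomp Require Import all_boot all_order all_algebra.
From mathcomp Require Import reals complex boolp classical_sets.
From mathcomp Require Import ring lra.
From Stdlib Require Import ClassicalEpsilon.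
Import Order.TTheory GRing.Theory Num.Theory.
Set Implicit Arguments. Unset Strict Implicit. Unset Printing Implicit Defensive.
Local Open Scope ring_scope.
Local Open Scope complex_scope.

(* For self-adjoint A and B, A ⪯ B holds exactly when B P = A for some orthogonal
   projection P, and then B P_A = A = P_A B.  Let M and J be the meet and the join
   of the range projections P_A (A ∈ T).  Since P_A B M = A M = B P_A M = B M, the
   range of B M lies below every P_A, hence below M; since P_A B (1 - J) =
   B P_A (1 - J) = 0, the range of B (1 - J) is orthogonal to every P_A, hence to J.
   In both cases B leaves the range of a projection invariant, so it commutes with
   it, and B M, B J are self-adjoint.  Now A M = B M gives B M ⪯ A; a lower bound G
   of T satisfies M P_G = P_G and B M P_G = A P_G = G; and for an upper bound G,
   G - B vanishes on every P_A, hence on J, so G J = B J.  The Hilbert space input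
   (range projections, meets and joins of projections) all comes from the
   closest-point theorem for closed subspaces. *)

Section Hilbert.
Variables (R : realType) (V : lmodType R[i]) (ip : V -> V -> R[i]).
Hypothesis hH : is_Hilbert ip.

(** * Inner product and squared norm *)

Lemma ip_lin a x y z : ip (a *: x + y) z = a * ip x z + ip y z.
Proof. by case: hH. Qed.
Lemma ip_conj x y : ip y x = (ip x y)^*.
Proof. by case: hH. Qed.
Lemma ip_ge0 x : 0 <= ip x x.
Proof. by case: hH. Qed.
Lemma ip_eq0 x : ip x x = 0 -> x = 0.
Proof. by case: hH => _ _ _ /(_ x). Qed.

Lemma ip0l z : ip 0 z = 0.
Proof.
by have := ip_lin 1 0 0 z; rewrite scaler0 addr0 mul1r -{1}[ip 0 z]addr0 => /addrI <-.
Qed.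
Lemma ipDl x y z : ip (x + y) z = ip x z + ip y z.
Proof. by rewrite -[x]scale1r ip_lin mul1r scale1r. Qed.
Lemma ipZl a x z : ip (a *: x) z = a * ip x z.
Proof. by rewrite -[a *: x]addr0 ip_lin ip0l addr0. Qed.
Lemma ipNl x z : ip (- x) z = - ip x z.
Proof. by rewrite -scaleN1r ipZl mulN1r. Qed.
Lemma ipBl x y z : ip (x - y) z = ip x z - ip y z.
Proof. by rewrite ipDl ipNl. Qed.
Lemma ip0r z : ip z 0 = 0.
Proof. by rewrite ip_conj ip0l conjc0. Qed.
Lemma ipDr x y z : ip z (x + y) = ip z x + ip z y.
Proof. by rewrite ip_conj ipDl rmorphD /= -!ip_conj. Qed.
Lemma ipZr a x z : ip z (a *: x) = a^* * ip z x.
Proof. by rewrite ip_conj ipZl rmorphM /= -!ip_conj. Qed.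
Lemma ipBr x y z : ip z (x - y) = ip z x - ip z y.
Proof. by rewrite ip_conj ipBl rmorphB /= -!ip_conj. Qed.

Lemma ip_inj u v : (forall y, ip u y = ip v y) -> u = v.
Proof.
by move=> uv; apply/eqP; rewrite -subr_eq0; apply/eqP/ip_eq0; rewrite ipBl uv subrr.
Qed.

Definition normsq x : R := complex.Re (ip x x).
Definition rdot x y : R := complex.Re (ip x y).

Lemma ip_normsq x : ip x x = (normsq x)%:C.
Proof.
by have := ip_ge0 x; rewrite /normsq; case: (ip x x) => a b; rewrite lecE /= => /andP[/eqP ->].
Qed.
Lemma normsq_ge0 x : 0 <= normsq x.
Proof. by rewrite -lecR -ip_normsq ip_ge0. Qed.
Lemma normsq_eq0 x : normsq x = 0 -> x = 0.
Proof. by move=> x0; apply: ip_eq0; rewrite ip_normsq x0. Qed.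
Lemma normsq0 : normsq 0 = 0.
Proof. by rewrite /normsq ip0l. Qed.

Lemma rdotC x y : rdot x y = rdot y x.
Proof. by rewrite /rdot ip_conj; case: (ip _ _). Qed.
Lemma rdotDl x y z : rdot (x + y) z = rdot x z + rdot y z.
Proof. by rewrite /rdot ipDl; case: (ip x z) (ip y z) => [a b] [c d]. Qed.
Lemma rdotZl (s : R) x z : rdot (s%:C *: x) z = s * rdot x z.
Proof. by rewrite /rdot ipZl; case: (ip x z) => a b /=; rewrite mul0r subr0. Qed.
Lemma rdotNl x z : rdot (- x) z = - rdot x z.
Proof. by rewrite /rdot ipNl; case: (ip x z). Qed.
Lemma rdotDr x y z : rdot z (x + y) = rdot z x + rdot z y.
Proof. by rewrite rdotC rdotDl !(rdotC z). Qed.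
Lemma rdotZr (s : R) x z : rdot z (s%:C *: x) = s * rdot z x.
Proof. by rewrite rdotC rdotZl rdotC. Qed.
Lemma rdotNr x z : rdot z (- x) = - rdot z x.
Proof. by rewrite rdotC rdotNl rdotC. Qed.

Lemma normsqD x y : normsq (x + y) = normsq x + normsq y + 2 * rdot x y.
Proof. rewrite -[normsq _]/(rdot _ _) !(rdotDl, rdotDr) (rdotC y x) /normsq; lra. Qed.
Lemma normsqB x y : normsq (x - y) = normsq x + normsq y - 2 * rdot x y.
Proof. by rewrite normsqD -[normsq (- y)]/(rdot _ _) rdotNl rdotNr opprK rdotNr mulrN. Qed.
Lemma normsqN x : normsq (- x) = normsq x.
Proof. by rewrite -[normsq _]/(rdot _ _) rdotNl rdotNr opprK. Qed.
Lemma normsqZ (s : R) x : normsq (s%:C *: x) = s ^+ 2 * normsq x.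
Proof. by rewrite -[normsq _]/(rdot _ _) rdotZl rdotZr mulrA expr2. Qed.
Lemma normsqZc (a : R[i]) x : normsq (a *: x) = complex.Re (a * a^*) * normsq x.
Proof.
by rewrite /normsq ipZl ipZr mulrA ip_normsq; case: a => p q /=; rewrite mulr0 subr0.
Qed.

Lemma rdot_amgm a b (t : R) : 0 < t -> 2 * rdot a b <= t * normsq a + normsq b / t.
Proof.
move=> t0; have := normsq_ge0 (t%:C *: a - b); rewrite normsqB normsqZ rdotZl => h.
have e : normsq b / t * t = normsq b by rewrite mulfVK // lt0r_neq0.
rewrite -(ler_pM2r t0) [(_ + _ / t) * t]mulrDl e; nra.
Qed.

Lemma normsqD_le a b (t : R) : 0 < t ->
  normsq (a + b) <= (1 + t) * normsq a + (1 + t^-1) * normsq b.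
Proof. by move=> t0; rewrite normsqD; have := rdot_amgm a b t0; lra. Qed.

Lemma normsqD_le2 a b : normsq (a + b) <= 2 * normsq a + 2 * normsq b.
Proof. by have := normsqD_le a b ltr01; rewrite invr1. Qed.

Lemma normsq_complete (u : nat -> V) :
  (forall e : R, 0 < e -> exists M, forall m n, (M <= m)%N -> (M <= n)%N ->
     normsq (u m - u n) < e) ->
  exists l, forall e : R, 0 < e -> exists M, forall n, (M <= n)%N -> normsq (u n - l) < e.
Proof.
move=> u_cauchy; case: hH => _ _ _ _ /(_ u) [e|l u_l].
  rewrite ltcE /= => /andP[/eqP e_real /u_cauchy [M hM]]; exists M => m n hm hn.
  by rewrite ip_normsq ltcE /= e_real eqxx hM.
exists l => e e0; have [|M hM] := u_l e%:C; first by rewrite ltcR.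
by exists M => n /hM; rewrite ip_normsq ltcR.
Qed.

Lemma invS_gt0 n : 0 < n.+1%:R^-1 :> R.
Proof. by rewrite invr_gt0 ltr0Sn. Qed.

Lemma eventually_invS_lt (e : R) : 0 < e ->
  exists M, forall n, (M <= n)%N -> n.+1%:R^-1 < e.
Proof.
move=> /ltr_add_invr [M]; rewrite add0r => hM; exists M => n Mn.
by apply: le_lt_trans hM; rewrite lef_pV2 ?posrE ?ltr0Sn // ler_nat ltnS.
Qed.

Lemma normsq_mid y k1 k2 : normsq (k1 - k2) =
  2 * normsq (y - k1) + 2 * normsq (y - k2) - 4 * normsq (y - (2^-1)%:C *: (k1 + k2)).
Proof.
have sum : (y - k1) + (y - k2) = 2%:C *: (y - (2^-1)%:C *: (k1 + k2)).
  rewrite scalerBr scalerA -rmorphM /= mulfV ?pnatr_eq0 // scale1r.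
  by rewrite rmorph_nat scaler_nat mulr2n opprD addrACA.
have diff : (y - k2) - (y - k1) = k1 - k2 by rewrite opprB addrC addrA subrK.
have := normsqB (y - k2) (y - k1); rewrite diff rdotC.
have := normsqD (y - k1) (y - k2); rewrite sum normsqZ; lra.
Qed.

Lemma normsq_le_limit y l (u : nat -> V) (d : R) : 0 <= d ->
  (forall e : R, 0 < e -> exists M, forall n, (M <= n)%N -> normsq (u n - l) < e) ->
  (forall e : R, 0 < e -> exists M, forall n, (M <= n)%N -> normsq (y - u n) < d + e) ->
  normsq (y - l) <= d.
Proof.
move=> d0 u_l y_u; apply/ler_addgt0Pr => e e0.
(* [normsqD_le] with a small [t] stands in for the triangle inequality. *)
set t := e / (3 * (d + 1)); set s := t^-1.
have t0 : 0 < t by rewrite divr_gt0 // mulr_gt0 //; lra.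
have s0 : 0 < s by rewrite invr_gt0.
have td : t * (d + 1) = e / 3 by rewrite /t invfM mulrA mulfVK // lt0r_neq0 //; lra.
have cancel (c : R) : 0 < c -> (1 + c) * (e / (3 * (1 + c))) = e / 3.
  by move=> c0; rewrite mulrC invfM mulrA mulfVK // lt0r_neq0 //; lra.
have [|M1 h1] := y_u (e / (3 * (1 + t))); first by rewrite divr_gt0 // mulr_gt0 //; lra.
have [|M2 h2] := u_l (e / (3 * (1 + s))); first by rewrite divr_gt0 // mulr_gt0 //; lra.
set n := maxn M1 M2; have := normsqD_le (y - u n) (u n - l) t0.
rewrite addrA subrK -/s; have := h1 n (leq_maxl _ _); have := h2 n (leq_maxr _ _).
have := cancel _ t0; have := cancel _ s0.
move: (e / (3 * (1 + t))) (e / (3 * (1 + s))) => e1 e2; nra.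
Qed.

(** * The closest-point theorem *)

Definition adherent (S : V -> Prop) (y : V) : Prop :=
  forall e : R, 0 < e -> exists2 k, S k & normsq (k - y) < e.

Definition subspace (S : V -> Prop) : Prop :=
  S 0 /\ forall a x y, S x -> S y -> S (a *: x + y).

Definition closed_subspace (K : V -> Prop) : Prop :=
  subspace K /\ forall y, adherent K y -> K y.

Lemma min_dist_orth (K : V -> Prop) y l : subspace K -> K l ->
  (forall k, K k -> normsq (y - l) <= normsq (y - k)) ->
  forall k, K k -> ip (y - l) k = 0.
Proof.
move=> [K0 Klin] Kl l_min.
have rdot0 k : K k -> rdot (y - l) k = 0.
  (* compare l with the competitor t k + l for a suitable real t *)
  move=> Kk; set r := rdot (y - l) k; set t := r / (normsq k + 1).
  have k_ge0 := normsq_ge0 k.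
  have rt : r = t * (normsq k + 1) by rewrite mulfVK //; lra.
  have := l_min _ (Klin t%:C k l Kk Kl).
  rewrite opprD addrCA addrC [normsq (_ - _ *: k)]normsqB normsqZ rdotZr -/r => ineq.
  by rewrite rt (_ : t = 0) ?mul0r //; nra.
move=> k Kk; have := rdot0 _ (Klin 'i k 0 Kk K0); have := rdot0 _ Kk.
rewrite addr0 /rdot ipZr; case: (ip (y - l) k) => a b /= -> /eqP.
by rewrite mul0r mulN1r sub0r opprK => /eqP ->.
Qed.

Lemma closed_subspace_orth (K : V -> Prop) y : closed_subspace K ->
  exists2 z, K z & forall k, K k -> ip (y - z) k = 0.
Proof.
move=> [[K0 Klin] Kcl].
pose E : set R := image K (fun k => normsq (y - k)).
have E_lb : lbound E 0 by move=> _ [k _ <-]; exact: normsq_ge0.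
have E_inf : has_inf E by split; [exists (normsq (y - 0)), 0 | exists 0].
set d := inf E.
have d_ge0 : 0 <= d by apply: lb_le_inf => //; case: E_inf.
have d_le k : K k -> d <= normsq (y - k).
  by move=> Kk; apply: (ge_inf E_inf.2); exists k.
have /choice [ks ks_near] n : exists k, K k /\ normsq (y - k) < d + n.+1%:R^-1.
  have [_ [k Kk <-]] := inf_adherent (invS_gt0 n) E_inf; by exists k.
(* The midpoint of ks m and ks n lies in K, so by the parallelogram law the
   minimizing sequence is Cauchy.  The inverses are generalized before [lra],
   which does not treat them as atoms. *)
have ks_dist m n : normsq (ks m - ks n) <= 2 * m.+1%:R^-1 + 2 * n.+1%:R^-1.
  have Kmid : K ((2^-1)%:C *: (ks m + ks n)).
    rewrite -[X in K X]addr0; apply: (Klin) (K0); rewrite -[ks m]scale1r.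
    by apply: (Klin); [case: (ks_near m) | case: (ks_near n)].
  have [_ near_m] := ks_near m; have [_ near_n] := ks_near n.
  have := d_le _ Kmid; rewrite (normsq_mid y (ks m) (ks n)).
  by move: near_m near_n; move: (m.+1%:R^-1) (n.+1%:R^-1) => a b; lra.
have [l l_lim] : exists l, forall e : R, 0 < e ->
    exists M, forall n, (M <= n)%N -> normsq (ks n - l) < e.
  apply: normsq_complete => e e0; have [|M hM] := eventually_invS_lt (e := e / 4).
    lra.
  exists M => m n /hM hm /hM hn; have := ks_dist m n.
  by move: hm hn; move: (m.+1%:R^-1) (n.+1%:R^-1) => a b; lra.
have Kl : K l.
  by apply: Kcl => e /l_lim [M hM]; exists (ks M); [case: (ks_near M) | apply: hM].
exists l => //; apply: min_dist_orth => // k Kk; apply: le_trans (d_le _ Kk).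
apply: (normsq_le_limit d_ge0 l_lim) => e /eventually_invS_lt [M hM].
exists M => n /hM; have [_] := ks_near n.
by move: (n.+1%:R^-1) => a; lra.
Qed.

Definition linear_op (A : V -> V) : Prop :=
  forall (a : R[i]) x y, A (a *: x + y) = a *: A x + A y.
Definition normsq_bounded (A : V -> V) : Prop :=
  exists M : R, 0 <= M /\ forall x, normsq (A x) <= M * normsq x.
Definition symmetric_op (A : V -> V) : Prop :=
  forall x y, ip (A x) y = ip x (A y).

Section LinearOp.
Variable A : V -> V.
Hypothesis lA : linear_op A.

Lemma linear_op0 : A 0 = 0.
Proof. by have := lA 1 0 0; rewrite scaler0 addr0 scale1r -{1}[A 0]addr0 => /addrI <-. Qed.
Lemma linear_opD x y : A (x + y) = A x + A y.
Proof. by rewrite -[x]scale1r lA !scale1r. Qed.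
Lemma linear_opZ a x : A (a *: x) = a *: A x.
Proof. by rewrite -[a *: x]addr0 lA linear_op0 addr0. Qed.
Lemma linear_opB x y : A (x - y) = A x - A y.
Proof. by rewrite linear_opD -scaleN1r linear_opZ scaleN1r. Qed.

End LinearOp.

Lemma selfadjE A :
  selfadj ip A <-> [/\ linear_op A, normsq_bounded A & symmetric_op A].
Proof.
rewrite /selfadj /bounded_op; split.
  case=> [[lA [[M b] [M0 hM]]] sA]; split=> //; have b0 : b = 0 by have := ger0_Im M0.
  subst b; exists M; split => [|x]; first by rewrite -lecR.
  by have := hM x; rewrite !ip_normsq -[(M +i* 0)%C]/(M%:C) -rmorphM lecR.
case=> lA [M [M0 hM]] sA; split => //; split => //; exists M%:C; split => [|x].
  by rewrite lecR.
by rewrite !ip_normsq -rmorphM lecR.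
Qed.

Lemma selfadj_sym A : selfadj ip A -> symmetric_op A.
Proof. by case. Qed.

Lemma sym_comp_swap S T U : symmetric_op S -> symmetric_op T -> symmetric_op U ->
  (forall x, S (T x) = U x) -> forall x, T (S x) = U x.
Proof. by move=> sS sT sU STU x; apply: ip_inj => y; rewrite sT sS STU sU. Qed.

Lemma symmetric0 : symmetric_op (fun _ => 0).
Proof. by move=> x y; rewrite ip0l ip0r. Qed.

Lemma selfadj_id : selfadj ip id.
Proof. by apply/selfadjE; split=> //; exists 1; split=> // x; rewrite mul1r. Qed.

Lemma selfadj_sub S T : selfadj ip S -> selfadj ip T -> selfadj ip (fun x => S x - T x).
Proof.
move=> /selfadjE[lS [MS [MS0 hS]] sS] /selfadjE[lT [MT [MT0 hT]] sT]; apply/selfadjE; split.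
- by move=> a x y; rewrite lS lT scalerBr opprD addrACA.
- exists (2 * MS + 2 * MT); split => [|x]; first lra.
  apply: le_trans (normsqD_le2 _ _) _; rewrite normsqN.
  by have := hS x; have := hT x; have := normsq_ge0 x; nra.
- by move=> x y; rewrite ipBl ipBr sS sT.
Qed.

Lemma selfadj_comp S T : selfadj ip S -> selfadj ip T ->
  (forall x, S (T x) = T (S x)) -> selfadj ip (fun x => S (T x)).
Proof.
move=> /selfadjE[lS [MS [MS0 hS]] sS] /selfadjE[lT [MT [MT0 hT]] sT] ST.
apply/selfadjE; split.
- by move=> a x y; rewrite lT lS.
- exists (MS * MT); split => [|x]; first exact: mulr_ge0.
  by apply: le_trans (hS _) _; rewrite -mulrA ler_wpM2l.
- by move=> x y; rewrite sS sT ST.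
Qed.

Lemma proj_compl P : is_proj ip P -> is_proj ip (fun x => x - P x).
Proof.
move=> [sP PP]; split; first exact: (selfadj_sub selfadj_id sP).
have /selfadjE[lP _ _] := sP.
by move=> x; rewrite (linear_opB lP) PP subrr subr0.
Qed.

Lemma orth_decomp_uniq (K : V -> Prop) y z1 z2 : subspace K -> K z1 -> K z2 ->
  (forall k, K k -> ip (y - z1) k = 0) -> (forall k, K k -> ip (y - z2) k = 0) ->
  z1 = z2.
Proof.
move=> [_ Klin] K1 K2 o1 o2; apply/eqP; rewrite eq_sym -subr_eq0; apply/eqP/ip_eq0.
have Kd : K (z2 - z1) by rewrite addrC -scaleN1r; apply: Klin.
have e : (y - z1) - (y - z2) = z2 - z1 by rewrite opprB addrC addrA subrK.
by rewrite -{1}e ipBl o1 // o2 // subrr.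
Qed.

Lemma proj_onto (K : V -> Prop) : closed_subspace K ->
  exists P, [/\ is_proj ip P, forall x, K (P x) & forall x, K x -> P x = x].
Proof.
move=> hK; have [Ksub _] := hK; have [_ Klin] := Ksub.
have /choice [P hP] y : exists z, K z /\ forall k, K k -> ip (y - z) k = 0.
  by have [z Kz oz] := closed_subspace_orth y hK; exists z.
have PK x : K (P x) by case: (hP x).
have P_orth x k : K k -> ip (x - P x) k = 0 by move=> Kk; case: (hP x) => _ ->.
have P_orth_r x k : K k -> ip k (x - P x) = 0.
  by move=> Kk; rewrite ip_conj P_orth ?conjc0.
have P_uniq y z : K z -> (forall k, K k -> ip (y - z) k = 0) -> P y = z.
  by move=> Kz; apply: (orth_decomp_uniq Ksub (PK y) Kz (P_orth y)).
have P_fix x : K x -> P x = x by move=> Kx; apply: P_uniq => // k _; rewrite subrr ip0l.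
exists P; split=> //; split => [|x]; last exact/P_fix.
apply/selfadjE; split.
- move=> a x y; apply: P_uniq => [|k Kk]; first exact: Klin.
  have -> : a *: x + y - (a *: P x + P y) = a *: (x - P x) + (y - P y).
    by rewrite scalerBr opprD addrACA.
  by rewrite ip_lin !P_orth // mulr0 addr0.
- exists 1; split => // x; rewrite mul1r.
  have := normsqD (P x) (x - P x); rewrite addrC subrK /rdot P_orth_r //=.
  by have := normsq_ge0 (x - P x); lra.
- move=> x y; rewrite -{1}(subrK (P y) y) -{2}(subrK (P x) x) ipDr ipDl.
  by rewrite P_orth_r // P_orth // add0r.
Qed.

Lemma zero_on_adherent D (S : V -> Prop) : selfadj ip D ->
  (forall z, S z -> D z = 0) -> forall y, adherent S y -> D y = 0.
Proof.
move=> /selfadjE[lD [M [M0 hM]] _] DS y Sy; apply: normsq_eq0; apply/eqP.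
rewrite eq_le normsq_ge0 andbT; apply/ler_addgt0Pr => e e0; rewrite add0r.
have [|k Sk ky] := Sy (e / (M + 1)); first by rewrite divr_gt0 //; lra.
have -> : D y = - D (k - y) by rewrite linear_opB // (DS k Sk) sub0r opprK.
rewrite normsqN; apply: le_trans (hM _) _.
have : (M + 1) * (e / (M + 1)) = e by rewrite mulrC mulfVK // lt0r_neq0 //; lra.
by move: (e / (M + 1)) ky => q ky; have := normsq_ge0 (k - y); nra.
Qed.

Lemma adherent_closed_subspace S : subspace S -> closed_subspace (adherent S).
Proof.
move=> [S0 Slin]; split; first split.
- by move=> e e0; exists 0; rewrite // subrr normsq0.
- move=> a y1 y2 ad1 ad2 e e0; set c := complex.Re (a * a^*).
  have c0 : 0 <= c by have := mulcJ_ge0 a; rewrite lecE => /andP[_].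
  have [|k1 S1 k1y1] := ad1 (e / (4 * (c + 1))).
    by rewrite divr_gt0 // mulr_gt0 //; lra.
  have [|k2 S2 k2y2] := ad2 (e / 4); first lra.
  exists (a *: k1 + k2); first exact: Slin.
  have -> : a *: k1 + k2 - (a *: y1 + y2) = a *: (k1 - y1) + (k2 - y2).
    by rewrite scalerBr opprD addrACA.
  apply: le_lt_trans (normsqD_le2 _ _) _; rewrite normsqZc -/c.
  have : 4 * (c + 1) * (e / (4 * (c + 1))) = e.
    by rewrite mulrC mulfVK // lt0r_neq0 //; lra.
  by move: (e / (4 * (c + 1))) k1y1 => q k1y1; have := normsq_ge0 (k1 - y1); nra.
- move=> y ad_y e e0; have [|k ad_k ky] := ad_y (e / 4); first lra.
  have [|k' Sk' k'k] := ad_k (e / 4); first lra.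
  exists k' => //; rewrite -(subrK k k') -addrA.
  by apply: le_lt_trans (normsqD_le2 _ _) _; lra.
Qed.

(** * Range projections and the logical order *)

Lemma range_subspace A : linear_op A -> subspace (range A).
Proof.
move=> lA; split; first by exists 0; rewrite // linear_op0.
by move=> a _ _ [x _ <-] [y _ <-]; exists (a *: x + y); rewrite // lA.
Qed.

Lemma clrangeE A y : clrange ip A y <-> adherent (range A) y.
Proof.
split => [ad e e0 | ad e].
  have [|x] := ad e%:C; first by rewrite ltcR.
  by rewrite ip_normsq ltcR; exists (A x) => //; exists x.
rewrite ltcE /= => /andP[/eqP e_real /ad [_ [x _ <-]]] Axy.
by exists x; rewrite ip_normsq ltcE /= e_real eqxx.
Qed.

Section RangeProjection.
Variable A : V -> V.
Hypothesis lA : linear_op A.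

Lemma projP_spec : [/\ is_proj ip (projP ip A),
  forall x, adherent (range A) (projP ip A x) &
  forall y, adherent (range A) y -> projP ip A y = y].
Proof.
have /(epsilon_spec (inhabits id)) [Pproj Prange] : exists P, is_proj ip P /\
    forall y, (exists x, P x = y) <-> clrange ip A y.
  have [P [hP PK Pfix]] := proj_onto (adherent_closed_subspace (range_subspace lA)).
  by exists P; split => // y; rewrite clrangeE; split => [[x <-] // | /Pfix <-]; exists y.
split => // [x | y]; first by apply/clrangeE/Prange; exists x.
by move=> /clrangeE /Prange [x <-]; case: Pproj => _; apply.
Qed.

Lemma projP_proj : is_proj ip (projP ip A).
Proof. by case: projP_spec. Qed.

Lemma projP_range x : projP ip A (A x) = A x.
Proof.
case: projP_spec => _ _; apply => e e0.
by exists (A x); [exists x | rewrite subrr normsq0].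
Qed.

Lemma projP_annihilated D : selfadj ip D -> (forall z, D (A z) = 0) ->
  forall x, D (projP ip A x) = 0.
Proof.
move=> sD DA x; case: projP_spec => _ /(_ x) + _.
by apply: (zero_on_adherent (S := range A) sD) => _ [z _ <-].
Qed.

Lemma projP_le Q : is_proj ip Q -> (forall z, Q (A z) = A z) ->
  forall x, Q (projP ip A x) = projP ip A x.
Proof.
move=> /proj_compl[sC _] QA x; apply/eqP; rewrite eq_sym -subr_eq0; apply/eqP.
by apply: (projP_annihilated sC) => z /=; rewrite QA subrr.
Qed.

End RangeProjection.

Lemma selfadj_projP A : selfadj ip A -> forall x, A (projP ip A x) = A x.
Proof.
move=> sA x; have /selfadjE[lA _ symA] := sA; have [[sP PP] _ _] := projP_spec lA.
have /selfadjE[lP _ symP] := sP.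
apply/eqP; rewrite eq_sym -subr_eq0 -(linear_opB lA); apply/eqP.
apply: ip_inj => y; rewrite symA -(projP_range lA) -symP (linear_opB lP) PP subrr.
by rewrite !ip0l.
Qed.

Lemma log_le_projP A B : selfadj ip A -> log_le ip A B ->
  forall x, B (projP ip A x) = A x.
Proof.
move=> sA [C [sC [CA ->]]] x; have /selfadjE[lA _ _] := sA.
by rewrite selfadj_projP // (projP_annihilated lA sC CA) addr0.
Qed.

Lemma log_le_of_proj A B P : selfadj ip A -> selfadj ip B -> is_proj ip P ->
  (forall x, B (P x) = A x) -> log_le ip A B.
Proof.
move=> sA sB [sP PP] BP.
have PB := sym_comp_swap (selfadj_sym sB) (selfadj_sym sP) (selfadj_sym sA) BP.
exists (fun x => B x - A x); split; first exact: selfadj_sub.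
split => [x | ]; last by apply/funext => x; rewrite addrC subrK.
by rewrite /= -!(PB x) -(BP (P (B x))) PP subrr.
Qed.

Lemma proj_leE Q P : is_proj ip Q -> is_proj ip P ->
  proj_le Q P <-> forall x, P (Q x) = Q x.
Proof.
move=> [sQ _] [sP _]; have symQ := selfadj_sym sQ; have symP := selfadj_sym sP.
by split; apply: sym_comp_swap.
Qed.

(** * Meets and joins of projections *)

Section ProjLattice.
Variable F : (V -> V) -> Prop.
Hypothesis F_proj : forall P, F P -> is_proj ip P.

Local Notation M := (proj_meet ip F).
Local Notation J := (proj_join ip F).

Lemma proj_meet_spec : [/\ is_proj ip M, forall P, F P -> proj_le M P &
  forall Q, is_proj ip Q -> (forall P, F P -> proj_le Q P) -> proj_le Q M].
Proof.
pose K x := forall P, F P -> P x = x.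
have K_closed : closed_subspace K.
  split; first split.
  - by move=> P /F_proj[/selfadjE[lP _ _] _]; rewrite linear_op0.
  - move=> a x y Kx Ky P FP; have [/selfadjE[lP _ _] _] := F_proj FP.
    by rewrite lP Kx // Ky.
  - move=> y ad_y P FP; have [sC _] := proj_compl (F_proj FP).
    apply/eqP; rewrite eq_sym -subr_eq0; apply/eqP/(zero_on_adherent sC _ ad_y).
    by move=> z Kz /=; rewrite Kz ?subrr.
have [Q [hQ QK Kfix]] := proj_onto K_closed.
have /(epsilon_spec (inhabits (fun x : V => x))) [hM [M_low M_great]] :
    exists Q, is_proj ip Q /\ (forall P, F P -> proj_le Q P) /\
      (forall Q', is_proj ip Q' -> (forall P, F P -> proj_le Q' P) -> proj_le Q' Q).
  exists Q; split=> //; split => [P FP | Q' hQ' Q'F].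
    by apply/(proj_leE hQ (F_proj FP)) => x; apply: QK.
  apply/(proj_leE hQ' hQ) => x; apply: Kfix => P FP.
  exact: (proj_leE hQ' (F_proj FP)).1 (Q'F P FP) x.
by split.
Qed.

Lemma proj_join_spec : [/\ is_proj ip J, forall P, F P -> proj_le P J &
  forall Q, is_proj ip Q -> (forall P, F P -> proj_le P Q) -> proj_le J Q].
Proof.
pose K x := forall P, F P -> P x = 0.
have K_closed : closed_subspace K.
  split; first split.
  - by move=> P /F_proj[/selfadjE[lP _ _] _]; rewrite linear_op0.
  - move=> a x y Kx Ky P FP; have [/selfadjE[lP _ _] _] := F_proj FP.
    by rewrite lP Kx // Ky // scaler0 addr0.
  - move=> y ad_y P FP; have [sP _] := F_proj FP.
    by apply: (zero_on_adherent sP _ ad_y) => z; apply.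
have [Q [hQ QK Kfix]] := proj_onto K_closed; have /selfadjE[lQ _ _] := hQ.1.
have /(epsilon_spec (inhabits (fun x : V => x))) [hJ [J_up J_least]] :
    exists Q, is_proj ip Q /\ (forall P, F P -> proj_le P Q) /\
      (forall Q', is_proj ip Q' -> (forall P, F P -> proj_le P Q') -> proj_le Q Q').
  exists (fun x => x - Q x); split; first exact: proj_compl.
  split => [P FP x | Q' hQ' FQ' x].
    have [/selfadjE[lP _ _] _] := F_proj FP.
    by rewrite linear_opB // (QK x P FP) subr0.
  have /Kfix : K (x - Q' x).
    move=> P FP; have [/selfadjE[lP _ _] _] := F_proj FP.
    by rewrite linear_opB // (FQ' P FP) subrr.
  rewrite linear_opB //; move: (Q x) (Q' x) (Q (Q' x)) => a b c e.
  have -> : c = a - (x - b) by rewrite -e opprB addrC subrK.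
  by rewrite opprB addrA [b + _]addrC subrK.
by split.
Qed.

Lemma meet_projP Z : linear_op Z -> (forall P, F P -> forall z, P (Z z) = Z z) ->
  forall x, M (projP ip Z x) = projP ip Z x.
Proof.
move=> lZ FZ; have [hM _ M_great] := proj_meet_spec; have hPZ := projP_proj lZ.
apply/(proj_leE hPZ hM)/M_great => // P FP.
exact/(proj_leE hPZ (F_proj FP))/(projP_le lZ (F_proj FP) (FZ P FP)).
Qed.

Lemma join_projP Z : linear_op Z -> (forall P, F P -> forall z, P (Z z) = 0) ->
  forall x, J (projP ip Z x) = 0.
Proof.
move=> lZ FZ x; have [hJ _ J_least] := proj_join_spec.
have le_J : proj_le J (fun y => y - projP ip Z y).
  apply: J_least; first exact/proj_compl/projP_proj.
  move=> P FP y; have [sP _] := F_proj FP; have /selfadjE[lP _ _] := sP.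
  by rewrite linear_opB // (projP_annihilated lZ sP (FZ P FP)) subr0.
have /selfadjE[lJ _ _] := hJ.1; have := le_J x; rewrite /= linear_opB //.
by move=> /eqP; rewrite subr_eq addrC -subr_eq subrr eq_sym => /eqP.
Qed.

End ProjLattice.

(** * Bounds in the logical order *)

Lemma proj_commute P B : is_proj ip P -> selfadj ip B ->
  (forall x, P (B (P x)) = B (P x)) -> forall x, B (P x) = P (B x).
Proof.
move=> [/selfadj_sym symP _] /selfadj_sym symB PBP x; apply: ip_inj => y.
transitivity (ip x (B (P y))); first by rewrite -PBP symP symB symP PBP.
by rewrite symP symB.
Qed.

Section LogicalBounds.
Variables (T : (V -> V) -> Prop) (B : V -> V).
Hypotheses (sT : forall A, T A -> selfadj ip A) (sB : selfadj ip B).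
Hypothesis TB : forall A, T A -> log_le ip A B.

Local Notation F := (projs_of ip T).
Local Notation M := (proj_meet ip F).
Local Notation J := (proj_join ip F).

Lemma projs_of_proj P : F P -> is_proj ip P.
Proof. by move=> [A [/sT/selfadjE[lA _ _] ->]]; apply: projP_proj. Qed.

Lemma projs_of_projP A : T A -> F (projP ip A).
Proof. by exists A. Qed.

Lemma B_projP A : T A -> forall x, B (projP ip A x) = A x.
Proof. by move=> TA; apply: log_le_projP; [apply: sT | apply: TB]. Qed.

Lemma projP_B A : T A -> forall x, projP ip A (B x) = A x.
Proof.
move=> TA; have [sP _] := projs_of_proj (projs_of_projP TA).
by apply: sym_comp_swap (selfadj_sym sB) (selfadj_sym sP) (selfadj_sym (sT TA)) (B_projP TA).
Qed.

Lemma meet_commute x : B (M x) = M (B x).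
Proof.
have [hM M_low _] := proj_meet_spec projs_of_proj.
have /selfadjE[lB _ _] := sB; have /selfadjE[lM _ _] := hM.1.
have lBM : linear_op (fun x => B (M x)) by move=> a y z; rewrite lM lB.
(* P_A (B (M z)) = A (M z) = B (P_A (M z)) = B (M z) *)
apply: (proj_commute hM sB) => {}x; rewrite -(projP_range lBM x) meet_projP //.
  exact: projs_of_proj.
move=> _ [A [TA ->]] z; rewrite projP_B // -B_projP //.
have FA := projs_of_projP TA.
by congr B; apply: (proj_leE hM (projs_of_proj FA)).1 (M_low _ FA) z.
Qed.

Lemma join_commute x : B (J x) = J (B x).
Proof.
have [hJ J_up _] := proj_join_spec projs_of_proj.
have /selfadjE[lB _ _] := sB; have /selfadjE[lJ _ _] := hJ.1.
pose Z y := B (y - J y).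
have lZ : linear_op Z.
  move=> a y z; rewrite /Z lJ -lB; congr B.
  by rewrite scalerBr opprD addrACA.
(* P_A (B (z - J z)) = B (P_A (z - J z)) = 0 *)
have JZ y : J (B (y - J y)) = 0.
  rewrite -[B _]/(Z y) -(projP_range lZ y) join_projP //; first exact: projs_of_proj.
  move=> _ [A [TA ->]] z; have FA := projs_of_projP TA.
  have /selfadjE[lP _ _] := (projs_of_proj FA).1.
  by rewrite /Z projP_B // -B_projP // (linear_opB lP) (J_up _ FA) subrr linear_op0.
have inv y : B (y - J y) - J (B (y - J y)) = B (y - J y) by rewrite JZ subr0.
have := proj_commute (proj_compl hJ) sB inv x.
by rewrite (linear_opB lB) => /addrI /oppr_inj.
Qed.

Lemma meet_is_glb : (exists A, T A) -> is_glb ip T (fun x => B (M x)).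
Proof.
move=> [A0 TA0]; have [hM M_low M_great] := proj_meet_spec projs_of_proj.
have sBM := selfadj_comp sB hM.1 meet_commute.
have BM_A A : T A -> forall x, B (M x) = A (M x).
  move=> TA x; have FA := projs_of_projP TA.
  by rewrite -(B_projP TA) ((proj_leE hM (projs_of_proj FA)).1 (M_low _ FA)).
split => //; split => [A TA | G sG G_low].
  by apply: (log_le_of_proj sBM (sT TA) hM) => x; rewrite (BM_A _ TA).
have /selfadjE[lG _ _] := sG.
have A_PG A : T A -> forall x, A (projP ip G x) = G x.
  by move=> TA; exact: log_le_projP sG (G_low _ TA).
apply: (log_le_of_proj sG sBM (projP_proj lG)) => x.
rewrite (BM_A _ TA0) (meet_projP projs_of_proj lG) ?A_PG // => _ [A [TA ->]] z.
by rewrite -(A_PG _ TA) -(projP_B TA) (projs_of_proj (projs_of_projP TA)).2.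
Qed.

Lemma join_is_lub : is_lub ip T (fun x => B (J x)).
Proof.
have [hJ J_up _] := proj_join_spec projs_of_proj.
have sBJ := selfadj_comp sB hJ.1 join_commute.
split => //; split => [A TA | G sG G_up].
  have FA := projs_of_projP TA; have hP := projs_of_proj FA.
  apply: (log_le_of_proj (sT TA) sBJ hP) => x.
  by rewrite ((proj_leE hP hJ).1 (J_up _ FA)) B_projP.
pose D x := G x - B x; have sD : selfadj ip D := selfadj_sub sG sB.
have /selfadjE[lD _ symD] := sD.
have PA_D P : F P -> forall x, P (D x) = 0.
  move=> [A [TA ->]]; have [sP _] := projs_of_proj (projs_of_projP TA).
  apply: sym_comp_swap symD (selfadj_sym sP) symmetric0 _ => x.
  by rewrite /D (log_le_projP (sT TA) (G_up _ TA)) B_projP // subrr.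
have [[sPD _] _ _] := projP_spec lD.
have PD_J : forall x, projP ip D (J x) = 0.
  apply: sym_comp_swap (selfadj_sym hJ.1) (selfadj_sym sPD) symmetric0 _ => x.
  by have := join_projP projs_of_proj lD PA_D; apply.
apply: (log_le_of_proj sBJ sG hJ) => x; apply/eqP; rewrite -subr_eq0; apply/eqP.
by rewrite -[LHS]/(D (J x)) -(selfadj_projP sD) PD_J linear_op0.
Qed.

End LogicalBounds.

End Hilbert.

Theorem theorem1 (R : realType) (V : lmodType R[i]) (ip : V -> V -> R[i])
  (hH : is_Hilbert ip) (T : (V -> V) -> Prop) (B : V -> V) :
  (forall A, T A -> selfadj ip A) ->
  (exists A, T A) ->
  selfadj ip B ->
  (forall A, T A -> log_le ip A B) ->
  let M := proj_meet ip (projs_of ip T) in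
  let J := proj_join ip (projs_of ip T) in
  [/\ selfadj ip (fun x => B (M x)),
      selfadj ip (fun x => B (J x)),
      is_glb ip T (fun x => B (M x)) &
      is_lub ip T (fun x => B (J x))].
Proof.
move=> sT T_nonempty sB TB M J.
have glb := meet_is_glb hH sT sB TB T_nonempty.
have lub := join_is_lub hH sT sB TB.
by split; [case: glb | case: lub | |].
Qed.
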